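(* Let $S=\{0,1,\dots,p-1\}$ with $p\ge 2$, let $m\ge 2$, and let $f:S^m\to S$ be a local rule. If there exists no pair of replaceable local configurations and no pair of periodic local configurations for $f$, then the global map $\tau$ is injective.
   Context: A local configuration is a finite word over $S$. For a word $w=w_1w_2\cdots w_n$ with $n\ge m$, its successor under $f$ is the word $\hat f(w)=u_1\cdots u_{n-m+1}$ with $u_j=f(w_j,w_{j+1},\dots,w_{j+m-1})$. For $k\le n$, $\mathrm{left}_k(w)=w_1\cdots w_k$ and $\mathrm{right}_k(w)=w_{n-k+1}\cdots w_n$. The global map is $\tau:S^{\mathbb Z}\to S^{\mathbb Z}$, $\tau(c)(i)=f(c(i-L),\dots,c(i+R))$ for fixed integers $L,R\ge 0$ with $L+1+R=m$; the CA is (globally) injective if $\tau$ is injective. Two local configurations $\alpha,\beta$ of the same length $n$ are replaceable if: $n\ge 2m-1$; $\alpha\ne\beta$; $\mathrm{left}_{m-1}(\alpha)=\mathrm{left}_{m-1}(\beta)$; $\mathrm{right}_{m-1}(\alpha)=\mathrm{right}_{m-1}(\beta)$; and $\hat f(\alpha)=\hat f(\beta)$. They are periodic if: $n\ge m$; $\alpha\ne\beta$; $\mathrm{left}_{m-1}(\alpha)=\mathrm{right}_{m-1}(\alpha)$; $\mathrm{left}_{m-1}(\beta)=\mathrm{right}_{m-1}(\beta)$; and $\hat f(\alpha)=\hat f(\beta)$. *)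

From mathcomp Require Import all_boot all_algebra.
Set Implicit Arguments. Unset Strict Implicit. Unset Printing Implicit Defensive.

Section CA.
Variables (p m : nat).
Implicit Types (f : m.-tuple 'I_p -> 'I_p) (w : seq 'I_p).

Definition window (x0 : 'I_p) w (j : nat) : m.-tuple 'I_p :=
  [tuple nth x0 w (j + i) | i < m].

Definition succw f w : seq 'I_p :=
  match w with
  | [::] => [::]
  | x0 :: _ => [seq f (window x0 w j) | j <- iota 0 (size w - m).+1]
  end.

Definition leftk (k : nat) w := take k w.
Definition rightk (k : nat) w := drop (size w - k) w.

Definition replaceable f (a b : seq 'I_p) : Prop :=
  size a = size b /\ 2 * m - 1 <= size a /\ a <> b /\
  leftk m.-1 a = leftk m.-1 b /\
  rightk m.-1 a = rightk m.-1 b /\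
  succw f a = succw f b.

Definition periodic f (a b : seq 'I_p) : Prop :=
  size a = size b /\ m <= size a /\ a <> b /\
  leftk m.-1 a = rightk m.-1 a /\
  leftk m.-1 b = rightk m.-1 b /\
  succw f a = succw f b.

(* global map with neighbourhood offsets L, R (L + 1 + R = m):
   tau(c)(i) = f(c(i-L), ..., c(i+R)) *)
Definition global_map (L : nat) f (c : int -> 'I_p) : int -> 'I_p :=
  fun i => f [tuple c (i - L%:Z + i0%:Z)%R | i0 < m].

End CA.

From mathcomp Require Import all_boot all_order all_algebra zify.
From Stdlib Require Import Classical FunctionalExtensionality.
Set Implicit Arguments. Unset Strict Implicit. Unset Printing Implicit Defensive.
Import Order.TTheory GRing.Theory Num.Theory.

(* Let k = m - 1 and suppose tau(c) = tau(d) with c i0 <> d i0.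
   Every finite segment of c and of d then has the same successor, since the
   successor of a segment is a segment of tau(c) = tau(d).  Say that c and d
   "agree" at a position a if they coincide on the k cells a, ..., a + k - 1.
   - If they agree at some position left of i0 and at some position right of
     i0, the two segments spanning both agreement windows are replaceable.
   - Otherwise they disagree at every position on one side of i0.  The pairs of
     k-windows (of c and of d) range over a finite set, so by pigeonhole two
     positions a < a' carry the same pair; the segments from a to a' + k - 1
     are then periodic, and distinct since the windows at a differ. *)

Lemma nat_to_fin_not_injective (T : finType) (g : nat -> T) :
  exists i j, i != j /\ g i = g j.
Proof.
pose h : 'I_#|T|.+1 -> T := fun i => g i.
have /injectivePn [x [y xy hxy]] : ~~ injectiveb h.
  by apply/injectiveP => /leq_card; rewrite card_ord ltnn.
by exists (val x), (val y).
Qed.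

Section Segments.
Variable p : nat.
Implicit Types (c : int -> 'I_p) (a : int).

Definition seg c a (n : nat) : seq 'I_p := mkseq (fun i => c (a + i%:Z)%R) n.

Lemma size_seg c a n : size (seg c a n) = n.
Proof. by rewrite size_mkseq. Qed.

Lemma nth_seg c a n x0 j : j < n -> nth x0 (seg c a n) j = c (a + j%:Z)%R.
Proof. by move=> jn; rewrite nth_mkseq. Qed.

Lemma leftk_seg c a n k : k <= n -> leftk k (seg c a n) = seg c a k.
Proof.
by move=> kn; rewrite /leftk /seg /mkseq -map_take take_iota (minn_idPl kn).
Qed.

Lemma rightk_seg c a n k : k <= n ->
  rightk k (seg c a n) = seg c (a + (n - k)%:Z)%R k.
Proof.
move=> kn; rewrite /rightk size_seg /seg /mkseq -map_drop drop_iota.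
rewrite (_ : n - (n - k) = k); last by lia.
rewrite add0n -[n - k]addn0 iotaDl -map_comp; apply: eq_map => i /=.
by congr c; lia.
Qed.

Lemma succw_seg m L (f : m.-tuple 'I_p -> 'I_p) c a n : 0 < m -> m <= n ->
  succw f (seg c a n) =
  mkseq (fun j => global_map L f c (a + L%:Z + j%:Z)%R) (n - m).+1.
Proof.
case: n => [|n] m_gt0 mn; first by lia.
set w := seg c a n.+1; set x0 := c (a + 0%:Z)%R.
change (succw f w) with [seq f (window m x0 w j) | j <- iota 0 (size w - m).+1].
rewrite size_seg; apply/eq_in_map => j; rewrite mem_iota => /andP [_ hj].
rewrite /global_map; congr f; apply: eq_from_tnth => i; rewrite !tnth_mktuple.
by rewrite nth_seg; [congr c; lia | have := ltn_ord i; lia].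
Qed.

End Segments.

Section EqualImages.
Variables (p m L : nat) (f : m.-tuple 'I_p -> 'I_p) (c d : int -> 'I_p).
Hypothesis m_gt0 : 0 < m.
Hypothesis same_image : global_map L f c = global_map L f d.

Let k := m.-1.

Lemma succw_seg_eq a n : m <= n -> succw f (seg c a n) = succw f (seg d a n).
Proof. by move=> mn; rewrite !(succw_seg L) // same_image. Qed.

Lemma replaceable_of_agreement a n j :
  2 * k + 1 <= n -> seg c a k = seg d a k ->
  seg c (a + (n - k)%:Z)%R k = seg d (a + (n - k)%:Z)%R k ->
  j < n -> c (a + j%:Z)%R <> d (a + j%:Z)%R ->
  replaceable f (seg c a n) (seg d a n).
Proof.
move=> long agree_l agree_r jn cd_j; have kn : k <= n by lia.
rewrite /replaceable -/k !size_seg !leftk_seg // !rightk_seg // succw_seg_eq;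
  last by lia.
do !split=> //; first by lia.
by move=> cd; apply: cd_j; rewrite -!(nth_seg _ _ (c a) jn) cd.
Qed.

Definition window_pair a : {ffun 'I_k -> 'I_p * 'I_p} :=
  [ffun i : 'I_k => (c (a + (i : nat)%:Z)%R, d (a + (i : nat)%:Z)%R)].

Lemma window_pair_seg a b : window_pair a = window_pair b ->
  seg c a k = seg c b k /\ seg d a k = seg d b k.
Proof.
move=> E; split; apply/eq_in_map => i; rewrite mem_iota add0n => /andP [_ ik];
by have := congr1 (fun F : {ffun _ -> _} => F (Ordinal ik)) E; rewrite !ffunE => -[].
Qed.

Lemma periodic_of_return a b : (a < b)%R -> window_pair a = window_pair b ->
  seg c a k <> seg d a k -> exists u v, periodic f u v.
Proof.
move=> ab /window_pair_seg [ret_c ret_d] cd_a.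
pose t := absz (b - a); have bE : b = (a + t%:Z)%R by rewrite /t; lia.
have kn : k <= t + k by rewrite leq_addl.
exists (seg c a (t + k)), (seg d a (t + k)).
rewrite /periodic -/k !size_seg !leftk_seg // !rightk_seg // addnK -bE.
rewrite -ret_c -ret_d succw_seg_eq; last by rewrite /k; lia.
do !split=> //; first by rewrite /k; lia.
by move=> cd; apply: cd_a; rewrite -(leftk_seg c a kn) cd leftk_seg.
Qed.

Lemma periodic_of_disagreement (pos : nat -> int) : injective pos ->
  (forall t, seg c (pos t) k <> seg d (pos t) k) ->
  exists u v, periodic f u v.
Proof.
move=> pos_inj disagree.
have [i [j [ij E]]] := nat_to_fin_not_injective (window_pair \o pos).
have : pos i != pos j by apply: contra ij => /eqP /pos_inj ->.
rewrite neq_lt => /orP [] lt_ij.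
- exact: (periodic_of_return lt_ij E).
- exact: (periodic_of_return lt_ij (esym E)).
Qed.

End EqualImages.

Theorem lemma4 (p m L R : nat) (f : m.-tuple 'I_p -> 'I_p) :
  2 <= p -> 2 <= m -> L + 1 + R = m ->
  (~ exists a b : seq 'I_p, replaceable f a b) ->
  (~ exists a b : seq 'I_p, periodic f a b) ->
  injective (global_map L f).
Proof.
move=> _ m_ge2 _ no_rep no_per c d same_image.
have m_gt0 : 0 < m by lia.
apply: functional_extensionality => i0; apply: NNPP => cd_i0.
pose k := m.-1; pose agree a := seg c a k = seg d a k.
have [[s agree_l]|no_left] := classic (exists s, agree (i0 - k%:Z - s%:Z)%R).
  have [[t agree_r]|no_right] := classic (exists t, agree (i0 + 1 + t%:Z)%R).
    apply: no_rep; exists (seg c (i0 - k%:Z - s%:Z)%R (k + s + 1 + t + k)),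
      (seg d (i0 - k%:Z - s%:Z)%R (k + s + 1 + t + k)).
    apply: (replaceable_of_agreement m_gt0 same_image (j := k + s) _ agree_l).
    + by lia.
    + by rewrite (_ : (_ + _)%R = (i0 + 1 + t%:Z)%R); last lia.
    + by lia.
    + by rewrite (_ : (_ + _)%R = i0); last lia.
  apply: no_per; apply: (periodic_of_disagreement m_gt0 same_image
    (pos := fun t => (i0 + 1 + t%:Z)%R)) => [t1 t2|t]; first by lia.
  by move=> agree_t; apply: no_right; exists t.
apply: no_per; apply: (periodic_of_disagreement m_gt0 same_image
  (pos := fun s => (i0 - k%:Z - s%:Z)%R)) => [s1 s2|s]; first by lia.
by move=> agree_s; apply: no_left; exists s.
Qed.
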